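(* In the setting described in the context (Assumptions A and B hold), let the VS-PGR scheme be run with step size $\alpha>0$ satisfying $\alpha\le L$ and a non-decreasing sequence of batch sizes $\{S_k\}$ with $S_0\ge 1/\alpha^2$. Let $\tilde L\triangleq\sqrt{1+2(1+2\alpha^2)\nu_1^2+2L^2}$ and $\nu^2\triangleq 2(1+2\alpha^2)\nu_1^2\|x^*\|^2+(1+2\alpha^2)\nu_2^2$. Then for every $k\ge0$, $$\mathbb{E}\big[\|x_{k+1}-x^*\|^2\mid\mathcal{F}_k\big]\le\big(1-2\alpha\eta+\alpha^2\tilde L^2\big)\|x_k-x^*\|^2+\frac{\nu^2}{S_k}\quad\text{a.s.}$$
   Context: Game: $n$ players; player $i$ chooses $x_i\in\mathbb{R}^{d_i}$, $x=(x_1,\dots,x_n)\in\mathbb{R}^d$, and solves $\min_{x_i} f_i(x_i,x_{-i})+r_i(x_i)$ with $f_i(x)=\mathbb{E}[\psi_i(x;\xi_i)]$, $\xi_i$ a random vector in $\mathbb{R}^{m_i}$, $\psi_i:\mathbb{R}^d\times\mathbb{R}^{m_i}\to\mathbb{R}$. A Nash equilibrium (NE) is $x^*$ such that for each $i$, $x_i^*$ minimizes $f_i(\cdot,x_{-i}^* )+r_i(\cdot)$. Assumption A: for each $i$, (i) $r_i$ is lower semicontinuous and convex with effective domain $\mathcal{R}_i$; (ii) for every $x_{-i}\in\prod_{j\ne i}\mathcal{R}_j$, $f_i(\cdot,x_{-i})$ is continuously differentiable and convex on an open set containing $\mathcal{R}_i$; (iii) for every such $x_{-i}$ and every $\xi_i$,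 $\psi_i(\cdot,x_{-i};\xi_i)$ is differentiable on an open set containing $\mathcal{R}_i$. Let $\mathcal{R}=\prod_j\mathcal{R}_j$ and $G(x)=(\nabla_{x_i}f_i(x))_{i=1}^n$. $\mathrm{prox}_{\alpha r_i}(z)=\arg\min_y\big(r_i(y)+\frac1{2\alpha}\|y-z\|^2\big)$. VS-PGR scheme: with $x_{i,0}\in\mathcal{R}_i$, at iteration $k$ each player $i$ draws $S_k$ realizations $\xi_{i,k}^1,\dots,\xi_{i,k}^{S_k}$ of $\xi_i$ and sets $x_{i,k+1}=\mathrm{prox}_{\alpha r_i}\big[x_{i,k}-\frac{\alpha}{S_k}\sum_{p=1}^{S_k}\nabla_{x_i}\psi_i(x_k;\xi_{i,k}^p)\big]$. Let $\bar w_{k,S_k}=\frac1{S_k}\sum_{p=1}^{S_k}(\nabla_{x_i}\psi_i(x_k;\xi_{i,k}^p))_{i=1}^n-G(x_k)$ and $\mathcal{F}_k=\sigma\{x_0,\dots,x_k\}$. Assumption B: (i) $\|G(x)-G(y)\|\le L\|x-y\|$ for all $x,y\in\mathcal{R}$; (ii) $(G(x)-G(y))^T(x-y)\ge\eta\|x-y\|^2$ for all $x,y\in\mathcal{R}$, with $\eta>0$; (iii) there are $\nu_1,\nu_2\ge0$ with $\mathbb{E}[\|\bar w_{k,S_k}\|^2\mid\mathcal{F}_k]\le(\nu_1^2\|x_k\|^2+\nu_2^2)/S_k$ a.s. for all $k\ge0$. Under these assumptions the NE $x^*$ exists and is unique. *)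

From HB Require Import structures.
From mathcomp Require Import all_boot all_order all_algebra.
From mathcomp Require Import all_classical all_reals all_analysis.
Set Implicit Arguments. Unset Strict Implicit. Unset Printing Implicit Defensive.
Import Order.TTheory GRing.Theory Num.Theory.
Import numFieldNormedType.Exports.
Local Open Scope classical_set_scope.
Local Open Scope ring_scope.

Section GameDefs.
Variable R : realType.

Definition sqn (m : nat) (v : 'rV[R]_m) : R := \sum_(j < m) v 0 j ^+ 2.
Definition vdot (m : nat) (u v : 'rV[R]_m) : R := \sum_(j < m) u 0 j * v 0 j.

(** Joint strategy space R^d = prod_i R^{d_i}, as a dependent family of blocks. *)
Definition joint (n : nat) (d : 'I_n -> nat) := forall i : 'I_n, 'rV[R]_(d i).

Definition jsub (n : nat) (d : 'I_n -> nat) (x y : joint d) : joint d :=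
  fun i => x i - y i.
Definition jnorm (n : nat) (d : 'I_n -> nat) (x : joint d) : R :=
  Num.sqrt (\sum_(i < n) sqn (x i)).
Definition jdot (n : nat) (d : 'I_n -> nat) (x y : joint d) : R :=
  \sum_(i < n) vdot (x i) (y i).

Definition jupd (n : nat) (d : 'I_n -> nat) (x : joint d) (i : 'I_n)
  (v : 'rV[R]_(d i)) : joint d :=
  @dfwith _ (fun j => 'rV[R]_(d j)) x i v.

Definition grad (m : nat) (g : 'rV[R]_m -> R) (y : 'rV[R]_m) : 'rV[R]_m :=
  \row_(j < m) derive g y (delta_mx 0 j).

Definition pgrad (n : nat) (d : 'I_n -> nat) (h : joint d -> R) (i : 'I_n)
  (x : joint d) : 'rV[R]_(d i) :=
  grad (fun y => h (jupd x y)) (x i).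

Definition econvex (m : nat) (g : 'rV[R]_m -> \bar R) : Prop :=
  forall (a b : 'rV[R]_m) (t : R), 0 <= t <= 1 ->
    (g (t *: a + (1 - t) *: b)%R <= t%:E * g a + (1 - t)%R%:E * g b)%E.

Definition elsc (m : nat) (g : 'rV[R]_m -> \bar R) : Prop :=
  forall c : R, closed [set y | (g y <= c%:E)%E].

Definition edom (m : nat) (g : 'rV[R]_m -> \bar R) : set 'rV[R]_m :=
  [set y | (g y < +oo)%E].

Definition convex_on (m : nat) (U : set 'rV[R]_m) (g : 'rV[R]_m -> R) : Prop :=
  forall (a b : 'rV[R]_m) (t : R), U a -> U b -> 0 <= t <= 1 ->
    U (t *: a + (1 - t) *: b) ->
    g (t *: a + (1 - t) *: b) <= t * g a + (1 - t) * g b.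

Definition is_prox (m : nat) (r : 'rV[R]_m -> \bar R) (alpha : R)
  (z p : 'rV[R]_m) : Prop :=
  forall y : 'rV[R]_m,
    (r p + (sqn (p - z) / (2 * alpha))%:E <= r y + (sqn (y - z) / (2 * alpha))%:E)%E.

Definition is_NE (n : nat) (d : 'I_n -> nat) (f : forall i : 'I_n, joint d -> R)
  (r : forall i : 'I_n, 'rV[R]_(d i) -> \bar R) (xs : joint d) : Prop :=
  forall (i : 'I_n) (y : 'rV[R]_(d i)),
    ((f i xs)%:E + r i (xs i) <= (f i (jupd xs y))%:E + r i y)%E.
End GameDefs.

Definition is_cond_exp (dT : measure_display) (T : measurableType dT)
  (R : realType) (P : probability T R) (G : set (set T)) (X Y : T -> R) : Prop :=
  [/\ (forall t, 0 <= Y t),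
      (forall B : set R, measurable B -> G (Y @^-1` B)) &
      (forall A, G A -> (\int[P]_(t in A) (Y t)%:E = \int[P]_(t in A) (X t)%:E)%E)].

(** F_k = sigma{x_0, ..., x_k}: the sigma-algebra generated by all the real
    coordinates of the random vectors x_0, ..., x_k. *)
Definition natural_filtration (dT : measure_display) (T : measurableType dT)
  (R : realType) (n : nat) (d : 'I_n -> nat) (x : nat -> T -> joint R d) (k : nat)
  : set (set T) :=
  <<s [set A | exists (j : nat) (i : 'I_n) (l : 'I_(d i)) (c : R),
          (j <= k)%N /\ A = [set t | x j t i 0 l <= c]] >>.

From HB Require Import structures.
From mathcomp Require Import all_boot all_order all_algebra.
From mathcomp Require Import all_classical all_reals all_analysis.
From mathcomp Require Import measurable_realfun.
From mathcomp Require Import ring lra.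
Import Order.TTheory GRing.Theory Num.Theory.
Import numFieldNormedType.Exports.
Local Open Scope classical_set_scope.
Local Open Scope ring_scope.

(** Testing the prox inequality defining [x_{k+1,i}] against [xs_i], and the
    first-order optimality of the equilibrium block [xs_i] against [x_{k+1,i}], shows
    that block by block [|x_{k+1} - xs|] is at most
    [|x_k - xs - alpha (G x_k - G xs) - alpha w_k|], where [w_k] is the sampling
    error.  Young's inequality, strong monotonicity and Lipschitz continuity of [G]
    turn this into the pathwise bound
    [|x_{k+1} - xs|^2 <= c |x_k - xs|^2 + (1 + 2 alpha^2) |w_k|^2].  The first term
    is [F_k]-measurable, so conditioning on [F_k] replaces [|w_k|^2] by its
    conditional mean, at most [(nu1^2 |x_k|^2 + nu2^2) / S_k]; splitting
    [|x_k|^2 <= 2 |x_k - xs|^2 + 2 |xs|^2] and using [1 / S_k <= alpha^2] moves the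
    state-dependent part of the noise into the contraction factor. *)

Lemma ler_of_le_addZ {R : realFieldType} (a b c : R) :
  (forall t, 0 < t <= 1 -> a <= b + t * c) -> a <= b.
Proof.
move=> H; apply/ler_addgt0Pr => e e0.
have c0 : 0 < `|c| + 1 by have := normr_ge0 c; lra.
pose t := Num.min 1 (e / (`|c| + 1)).
have t0 : 0 < t by rewrite lt_min ltr01 divr_gt0.
have t01 : 0 < t <= 1 by rewrite t0 ge_min lexx.
have tc : t * (`|c| + 1) <= e by rewrite -ler_pdivlMr // ge_min lexx orbT.
have : t * c <= t * (`|c| + 1).
  by apply: ler_wpM2l; [exact: ltW | have := ler_norm c; lra].
by have := H t t01; lra.
Qed.

Section Euclidean.
Context {R : realType}.

Lemma sqn_ge0 {m} (u : 'rV[R]_m) : 0 <= sqn u.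
Proof. by apply: sumr_ge0 => j _; exact: sqr_ge0. Qed.

Lemma sqn_addZ {m} (u v : 'rV[R]_m) t :
  sqn (u + t *: v) = sqn u + 2 * t * vdot u v + t ^+ 2 * sqn v.
Proof.
rewrite /sqn /vdot !mulr_sumr -!big_split /=; apply: eq_bigr => j _.
by rewrite !mxE; ring.
Qed.

Lemma sqn_sub_le_of_vdot {m} (p s z g : 'rV[R]_m) (a : R) : 0 < a ->
  0 <= vdot (p - z) (s - p) / a + vdot g (p - s) ->
  sqn (p - s) <= sqn (z - s + a *: g).
Proof.
move=> a0 H.
have -> : sqn (z - s + a *: g) = sqn (p - s) + sqn (z - p + a *: g)
   + 2 * a * (vdot (p - z) (s - p) / a + vdot g (p - s)).
  rewrite /sqn /vdot mulr_suml mulrDr !mulr_sumr -!big_split /=.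
  by apply: eq_bigr => j _; rewrite !mxE; field; lra.
have := sqn_ge0 (z - p + a *: g); have := mulr_ge0 (ltW a0) H; lra.
Qed.

Context {n : nat} {d : 'I_n -> nat}.

Lemma jnorm_sqrE (x : joint R d) : jnorm x ^+ 2 = \sum_(i < n) sqn (x i).
Proof. by rewrite /jnorm sqr_sqrtr //; apply: sumr_ge0 => i _; exact: sqn_ge0. Qed.

Lemma jnorm_ge0 (x : joint R d) : 0 <= jnorm x.
Proof. exact: sqrtr_ge0. Qed.

Lemma jdot_young (a b : joint R d) (t : R) :
  2 * t * jdot b a <= jnorm a ^+ 2 + t ^+ 2 * jnorm b ^+ 2.
Proof.
rewrite -subr_ge0 !jnorm_sqrE /jdot !mulr_sumr -!sumrN -!big_split /=.
apply: sumr_ge0 => i _; rewrite [leRHS](_ : _ = sqn (a i - t *: b i)) ?sqn_ge0 //.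
rewrite /sqn /vdot !mulr_sumr -!sumrN -!big_split /=.
by apply: eq_bigr => j _; rewrite !mxE; ring.
Qed.

Lemma jnorm_step_sqr_le (a b w : joint R d) (t : R) :
  jnorm (fun i => a i - t *: b i - t *: w i) ^+ 2 <=
  (1 + t ^+ 2) * jnorm a ^+ 2 - 2 * t * jdot b a
  + 2 * t ^+ 2 * jnorm b ^+ 2 + (1 + 2 * t ^+ 2) * jnorm w ^+ 2.
Proof.
rewrite !jnorm_sqrE /jdot !mulr_sumr -!sumrN -!big_split /=; apply: ler_sum => i _.
rewrite /sqn /vdot !mulr_sumr -!sumrN -!big_split /=; apply: ler_sum => j _.
rewrite !mxE -subr_ge0.
set A := a i 0 j; set B := b i 0 j; set W := w i 0 j.
have -> : (1 + t ^+ 2) * A ^+ 2 - 2 * t * (B * A) + 2 * t ^+ 2 * B ^+ 2 +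
  (1 + 2 * t ^+ 2) * W ^+ 2 - (A - t * B - t * W) ^+ 2
  = (t * A + W) ^+ 2 + (t * (B - W)) ^+ 2 by ring.
by apply: addr_ge0; exact: sqr_ge0.
Qed.

Lemma jnorm_sqr_le_sub (u s : joint R d) :
  jnorm u ^+ 2 <= 2 * jnorm (jsub u s) ^+ 2 + 2 * jnorm s ^+ 2.
Proof.
rewrite !jnorm_sqrE !mulr_sumr -big_split /=; apply: ler_sum => i _.
rewrite /sqn /jsub !mulr_sumr -big_split /=; apply: ler_sum => j _.
rewrite !mxE -subr_ge0.
have -> : 2 * (u i 0 j - s i 0 j) ^+ 2 + 2 * s i 0 j ^+ 2 - u i 0 j ^+ 2
  = (u i 0 j - 2 * s i 0 j) ^+ 2 by ring.
exact: sqr_ge0.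
Qed.

Lemma jupd_id (x : joint R d) i : jupd x (x i) = x.
Proof. by apply: functional_extensionality_dep => j; rewrite /jupd; case: dfwithP. Qed.

End Euclidean.

Section Gradient.
Context {R : realType} {m : nat}.

Lemma derive_grad_vdot {F : 'rV[R]_m -> R} {s} h : differentiable F s ->
  'D_h F s = vdot (grad F s) h.
Proof.
move=> dF; rewrite deriveE // [in LHS](row_sum_delta h) linear_sum /vdot.
by apply: eq_bigr => j _; rewrite linearZ /= /grad mxE -deriveE // mulrC.
Qed.

End Gradient.

Section ProperConvex.
Context {R : realType} {m : nat} {r : 'rV[R]_m -> \bar R}.
Hypothesis r_convex : econvex r.
Hypothesis r_gtNy : forall v, (-oo < r v)%E.

Lemma edom_fineK {v} : edom r v -> r v = (fine (r v))%:E.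
Proof. by move=> rv; rewrite fineK // fin_numE -ltNye -ltey r_gtNy. Qed.

Lemma edom_of_leeD {u v} {c c' : R} :
  (c%:E + r u <= c'%:E + r v)%E -> edom r v -> edom r u.
Proof.
move=> uv rv; have := le_lt_trans uv (lte_add_pinfty (ltry c') rv).
by rewrite /edom /=; case: (r u) => // x _; exact: ltry.
Qed.

Lemma econvex_segment {p y} t : edom r p -> edom r y -> 0 <= t <= 1 ->
  (r (p + t *: (y - p)) <= (fine (r p) + t * (fine (r y) - fine (r p)))%:E)%E.
Proof.
move=> rp ry /andP[t0 t1].
have -> : p + t *: (y - p) = t *: y + (1 - t) *: p.
  by apply/rowP => j; rewrite !mxE; ring.
apply: le_trans (r_convex y p t _) _; first by rewrite t0 t1.
by rewrite (edom_fineK rp) (edom_fineK ry) -!EFinM -EFinD lee_fin; lra.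
Qed.

Lemma minimizer_vdot_grad {F : 'rV[R]_m -> R} {s y} :
  (forall v, ((F s)%:E + r s <= (F v)%:E + r v)%E) -> differentiable F s ->
  edom r s -> edom r y -> fine (r s) - fine (r y) <= vdot (grad F s) (y - s).
Proof.
move=> s_min dF rs ry; set h := y - s.
have Dh : (fun t : R => t^-1 *: ((F \o shift s) (t *: h) - F s)) @ 0^'+ --> 'D_h F s.
  exact/cvg_dnbhs_at_right/(diff_derivable (v:=h) dF).
rewrite -derive_grad_vdot // -(cvg_lim _ Dh) //.
apply: limr_ge; first by apply/cvg_ex; exists ('D_h F s).
near=> t.
have t0 : 0 < t by near: t; exact: nbhs_right_gt.
have t1 : t <= 1 by near: t; apply: nbhs_right_le; exact: ltr01.
have := le_trans (s_min (s + t *: h)) (leeD2l _ (econvex_segment t rs ry _)).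
rewrite t1 ltW // (edom_fineK rs) -!EFinD lee_fin /= => /(_ isT) H.
by rewrite -(ler_pM2l t0) mulrA mulfV ?gt_eqF // mul1r (addrC (t *: h)); lra.
Unshelve. all: by end_near.
Qed.

Context {a : R} {z p : 'rV[R]_m}.
Hypotheses (a_gt0 : 0 < a) (p_prox : is_prox r a z p).

Lemma prox_edom {y} : edom r y -> edom r p.
Proof.
move=> ry; have := le_lt_trans (p_prox y); rewrite (edom_fineK ry) -EFinD.
by move=> /(_ _ (ltry _)); rewrite /edom /=; case: (r p) => // x _; exact: ltry.
Qed.

Lemma prox_vineq {y} : edom r y ->
  fine (r p) - fine (r y) <= vdot (p - z) (y - p) / a.
Proof.
move=> ry; have rp := prox_edom ry.
set rP := fine (r p); set rY := fine (r y); set V := vdot (p - z) (y - p).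
set S := sqn (p - z); set K := sqn (y - p).
(* compare [p] with the points [p + t (y - p)] and let [t] tend to [0] *)
apply: (@ler_of_le_addZ _ _ _ (K / (2 * a))) => t /andP[t0 t1].
have := p_prox (p + t *: (y - p)); rewrite (edom_fineK rp) -/rP.
move/le_trans/(_ (leeD2r _ (econvex_segment t rp ry _))).
rewrite t1 ltW // -!EFinD lee_fin => /(_ isT).
have -> : p + t *: (y - p) - z = (p - z) + t *: (y - p).
  by apply/rowP => j; rewrite !mxE; ring.
rewrite sqn_addZ -/S -/V -/K -/rY -/rP => H.
suff : t * (rP - rY - (V / a + t * (K / (2 * a)))) <= 0.
  by rewrite pmulr_rle0 // subr_le0.
have -> : t * (rP - rY - (V / a + t * (K / (2 * a)))) = (rP + S / (2 * a))
   - (rP + t * (rY - rP) + (S + 2 * t * V + t ^+ 2 * K) / (2 * a)).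
  by field; rewrite gt_eqF.
lra.
Qed.

End ProperConvex.

Section ProximalPseudoGradientStep.
Context {R : realType} {n : nat} {d : 'I_n -> nat}.
Context {f : forall i : 'I_n, joint R d -> R} {r : forall i, 'rV[R]_(d i) -> \bar R}.
Context {G : joint R d -> joint R d} {xs : joint R d} {L eta alpha : R}.

Let dom (y : joint R d) := forall i : 'I_n, edom (r i) (y i).

Hypotheses (r_convex : forall i, econvex (r i)) (r_gtNy : forall i v, (-oo < r i v)%E).
Hypotheses (xs_NE : is_NE f r xs) (xs_dom : dom xs).
Hypothesis f_diff : forall i, differentiable (fun v => f i (jupd xs v)) (xs i).
Hypothesis G_xs : G xs = fun i => pgrad (f i) i xs.
Hypothesis G_lipschitz : forall y z, dom y -> dom z ->
  jnorm (jsub (G y) (G z)) <= L * jnorm (jsub y z).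
Hypothesis G_strongly_monotone : forall y z, dom y -> dom z ->
  eta * jnorm (jsub y z) ^+ 2 <= jdot (jsub (G y) (G z)) (jsub y z).
Hypothesis alpha_gt0 : 0 < alpha.

Context {x w x' : joint R d}.
Hypothesis x_dom : dom x.
Hypothesis x'_prox : forall i,
  is_prox (r i) alpha (x i - alpha *: (G x i + w i)) (x' i).

Lemma pgr_dom : dom x'.
Proof. by move=> i; exact: (prox_edom (r_gtNy i) (x'_prox i) (xs_dom i)). Qed.

Lemma pgr_block_sqn_le i : sqn (x' i - xs i) <=
  sqn (x i - xs i - alpha *: (G x i - G xs i) - alpha *: w i).
Proof.
have prox_xs := prox_vineq (r_convex i) (r_gtNy i) alpha_gt0 (x'_prox i) (xs_dom i).
have xs_min v : ((f i (jupd xs (xs i)))%:E + r i (xs i) <= (f i (jupd xs v))%:E + r i v)%E.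
  by rewrite jupd_id; exact: xs_NE.
have := minimizer_vdot_grad (r_convex i) (r_gtNy i) xs_min (f_diff i) (xs_dom i)
  (pgr_dom i).
have -> : grad (fun v => f i (jupd xs v)) (xs i) = G xs i by rewrite G_xs.
move=> opt_xs.
have -> : x i - xs i - alpha *: (G x i - G xs i) - alpha *: w i =
    (x i - alpha *: (G x i + w i)) - xs i + alpha *: G xs i.
  by apply/rowP => j; rewrite !mxE; ring.
by apply: sqn_sub_le_of_vdot => //; lra.
Qed.

Let A := jnorm (jsub x xs) ^+ 2.
Let B := jnorm (jsub (G x) (G xs)) ^+ 2.

Let G_lipschitz_sqr : B <= L ^+ 2 * A.
Proof.
rewrite /A /B -exprMn !expr2.
by apply: ler_pM; rewrite ?jnorm_ge0 //; exact: G_lipschitz.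
Qed.

Lemma pgr_step_sqr_le : jnorm (jsub x' xs) ^+ 2 <=
  (1 + alpha ^+ 2 - 2 * alpha * eta + 2 * alpha ^+ 2 * L ^+ 2) * A
  + (1 + 2 * alpha ^+ 2) * jnorm w ^+ 2.
Proof.
have : jnorm (jsub x' xs) ^+ 2 <=
    jnorm (fun i => jsub x xs i - alpha *: jsub (G x) (G xs) i - alpha *: w i) ^+ 2.
  by rewrite !jnorm_sqrE; apply: ler_sum => i _; exact: pgr_block_sqn_le.
have := jnorm_step_sqr_le (jsub x xs) (jsub (G x) (G xs)) w alpha.
have := ler_wpM2l (ltW alpha_gt0) (G_strongly_monotone _ _ x_dom xs_dom).
have := ler_wpM2l (sqr_ge0 alpha) G_lipschitz_sqr.
rewrite -/A -/B; lra.
Qed.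

Lemma pgr_coef_ge0 :
  0 <= (1 + alpha ^+ 2 - 2 * alpha * eta + 2 * alpha ^+ 2 * L ^+ 2) * A.
Proof.
have A0 : 0 <= A := sqr_ge0 _.
have := jdot_young (jsub x xs) (jsub (G x) (G xs)) alpha.
have := ler_wpM2l (ltW alpha_gt0) (G_strongly_monotone _ _ x_dom xs_dom).
have := ler_wpM2l (sqr_ge0 alpha) G_lipschitz_sqr.
have := mulr_ge0 (sqr_ge0 alpha) A0.
have := mulr_ge0 (sqr_ge0 alpha) (mulr_ge0 (sqr_ge0 L) A0).
rewrite -/A -/B; lra.
Qed.

End ProximalPseudoGradientStep.

Section Integrals.
Context {dT : measure_display} {T : measurableType dT} {R : realType}.

Lemma measurable_EFin_in {E} {g : T -> R} : measurable E ->
  measurable_fun setT g -> measurable_fun E (EFin \o g).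
Proof.
move=> mE mg; apply: measurable_funS (_ : measurable_fun setT _) => //.
exact/measurable_EFinP.
Qed.

Variable mu : {measure set T -> \bar R}.

Lemma ge0_le_integral_nonmeas {D} {f g : T -> \bar R} :
  (forall t, D t -> (0 <= f t)%E) -> (forall t, D t -> (f t <= g t)%E) ->
  (\int[mu]_(t in D) f t <= \int[mu]_(t in D) g t)%E.
Proof.
move=> f0 fg; rewrite !ge0_integralE //; last first.
  by move=> t Dt; apply: le_trans (fg t Dt); exact: f0.
apply: ereal_sup_le => _ [h hf <-]; exists h => //= t.
apply: le_trans (hf t) _; rewrite /patch; case: ifP => // /set_mem Dt.
exact: fg.
Qed.

Lemma integral_le_dominated {E} {N h W : T -> R} {c} : measurable E ->
  measurable_fun setT N -> measurable_fun setT h -> 0 < c ->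
  (forall t, 0 <= N t) -> (forall t, 0 <= h t) -> (forall t, 0 <= W t) ->
  (forall t, N t <= h t + c * W t) ->
  (\int[mu]_(t in E) (N t)%:E <=
   \int[mu]_(t in E) (h t)%:E + c%:E * \int[mu]_(t in E) (W t)%:E)%E.
Proof.
move=> mE mN mh c0 N0 h0 W0 NhW.
(* [W] need not be measurable: only the measurable excess [(N - h)^+] is compared with it *)
pose N' t := Num.max (N t - h t) 0.
have mN' : measurable_fun setT N'.
  exact: measurable_maxr (measurable_funB mN mh) (measurable_cst _).
have N'0 t : 0 <= N' t by rewrite le_max lexx orbT.
have mEF (g : T -> R) : measurable_fun setT g -> measurable_fun E (EFin \o g).
  exact: measurable_EFin_in mE.
apply: (@le_trans _ _ (\int[mu]_(t in E) ((h t)%:E + (N' t)%:E))%E).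
  apply: ge0_le_integral => //.
  - by move=> t _; rewrite lee_fin.
  - exact: mEF.
  - by apply: (mEF (h \+ N')); exact: measurable_funD.
  - move=> t _; rewrite -EFinD lee_fin.
    have : N t - h t <= N' t by rewrite le_max lexx.
    lra.
rewrite ge0_integralD //; [|by move=> t _; rewrite lee_fin|exact: mEF
                            |by move=> t _; rewrite lee_fin|exact: mEF].
apply: leeD2l.
have -> : (\int[mu]_(t in E) (N' t)%:E = \int[mu]_(t in E) (c%:E * (N' t / c)%:E))%E.
  by apply: eq_integral => t _; rewrite -EFinM mulrC divfK ?gt_eqF.
rewrite ge0_integralZl //; last first.
- by rewrite lee_fin ltW.
- by move=> t _; rewrite lee_fin divr_ge0 // ltW.
- by apply: (mEF (fun t => N' t / c)); exact: measurable_funM.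
apply: lee_wpmul2l; first by rewrite lee_fin ltW.
apply: ge0_le_integral_nonmeas => t _; rewrite lee_fin; first by rewrite divr_ge0 // ltW.
rewrite ler_pdivrMr // mulrC /N' ge_max mulr_ge0 ?(ltW c0) // andbT.
by have := NhW t; lra.
Qed.

End Integrals.

Section ConditionalExpectation.
Context {dT : measure_display} {T : measurableType dT} {R : realType}.
Context (P : probability T R) {Gen : set (set T)}.
Hypothesis Gen_measurable : forall A, Gen A -> measurable A.

Let G_measurable (f : T -> R) :=
  measurable_fun (setT : set (g_sigma_algebraType Gen)) f.

Lemma sigma_Gen_measurable {A} : <<s Gen >> A -> measurable A.
Proof. exact: (smallest_sub (@sigma_algebra_measurable _ T) Gen_measurable). Qed.

Lemma G_measurable_fun {f} : G_measurable f -> measurable_fun setT f.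
Proof. by move=> mf _ B mB; apply: sigma_Gen_measurable; exact: mf. Qed.

Lemma cond_exp_G_measurable {X Y} : is_cond_exp P <<s Gen >> X Y -> G_measurable Y.
Proof. by move=> [_ mY _] _ B mB; rewrite setTI; exact: mY. Qed.

Lemma measure0_of_integral_gap E (Y B : T -> R) (e c : R) : measurable E ->
  measurable_fun setT Y -> measurable_fun setT B -> 0 < e -> 0 <= c ->
  (forall t, 0 <= B t) -> (forall t, E t -> B t <= c) ->
  (forall t, E t -> B t + e <= Y t) ->
  (\int[P]_(t in E) (Y t)%:E <= \int[P]_(t in E) (B t)%:E)%E -> P E = 0%E.
Proof.
move=> mE mY mB e0 c0 B0 Bc BeY YB.
have mEF (g : T -> R) : measurable_fun setT g -> measurable_fun E (EFin \o g).
  exact: measurable_EFin_in mE.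
have PE_fin : P E \is a fin_num.
  by rewrite ge0_fin_numE ?measure_ge0 // (le_lt_trans (probability_le1 P mE)) ?ltry.
have IB_le : (\int[P]_(t in E) (B t)%:E <= \int[P]_(t in E) (cst c%:E) t)%E.
  apply: (ge0_le_integral _ mE _ (mEF _ mB) (measurable_cst _)) => [t _|t /Bc];
    by rewrite lee_fin.
have IB_fin : (\int[P]_(t in E) (B t)%:E)%E \is a fin_num.
  rewrite ge0_fin_numE; last by apply: integral_ge0 => t _; rewrite lee_fin.
  by apply: le_lt_trans IB_le _; rewrite integral_cst // ltey_eq fin_numM.
have : (\int[P]_(t in E) (B t)%:E + e%:E * P E <= \int[P]_(t in E) (B t)%:E)%E.
  apply: le_trans YB; rewrite -integral_cst // -ge0_integralD //; last 3 first.
  - by move=> t _; rewrite lee_fin.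
  - exact: mEF.
  - by move=> t _; rewrite lee_fin ltW.
  apply: (ge0_le_integral _ mE _ _ (mEF _ mY)) => [t _||t /BeY].
  - by rewrite lee_fin addr_ge0 // ltW.
  - by apply: emeasurable_funD; [exact: mEF|exact: measurable_cst].
  - by rewrite /= -EFinD lee_fin.
rewrite -(fineK IB_fin) -(fineK PE_fin) -EFinM -EFinD lee_fin gerDl pmulr_rle0 //.
move=> PE0; rewrite -(fineK PE_fin); congr (_%:E); apply/eqP.
by rewrite eq_le PE0 /=; apply/fine_ge0/measure_ge0.
Qed.

Lemma ae_le_of_integral_le (Y B : T -> R) : G_measurable Y -> G_measurable B ->
  (forall t, 0 <= B t) ->
  (forall E, <<s Gen >> E ->
     (\int[P]_(t in E) (Y t)%:E <= \int[P]_(t in E) (B t)%:E)%E) ->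
  {ae P, forall t, Y t <= B t}.
Proof.
move=> mY mB B0 YB.
(* the sets [S k] exhaust [{B < Y}], and on each of them [Y] exceeds the bounded [B]
   uniformly *)
pose S k := ((fun t => Y t - B t) @^-1` `[k.+1%:R^-1, +oo[) `&` (B @^-1` `]-oo, k%:R]).
have GS k : <<s Gen >> (S k).
  apply: (@measurableI _ (g_sigma_algebraType Gen)); rewrite -[X in measurable X]setTI.
  - by apply: (measurable_funB mY mB) => //; exact: measurable_itv.
  - by apply: mB => //; exact: measurable_itv.
have PS0 k : P (S k) = 0%E.
  apply: (@measure0_of_integral_gap (S k) Y B k.+1%:R^-1 k%:R) => //.
  - exact: (sigma_Gen_measurable (GS k)).
  - exact: G_measurable_fun.
  - exact: G_measurable_fun.
  - by move=> t [_ /=]; rewrite in_itv.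
  - by move=> t [/= + _]; rewrite in_itv /= andbT lerBrDr addrC.
  - exact: YB.
apply: (@negligibleS _ _ _ P (\bigcup_k S k)); last first.
  apply: negligible_bigcup => k; exists (S k).
  by split; [exact: (sigma_Gen_measurable (GS k)) | exact: PS0 | by []].
move=> t /negP; rewrite -ltNge -subr_gt0 => YBt.
pose k := maxn (Num.bound (B t)) (Num.bound (Y t - B t)^-1).
exists k => //; split => /=; rewrite in_itv /= ?andbT.
- rewrite invf_ple ?posrE //; apply: (le_trans (ltW (archi_boundP _))).
    by rewrite invr_ge0 ltW.
  by rewrite ler_nat /k; apply/leqW/leq_maxr.
- apply: (le_trans (ltW (archi_boundP (B0 t)))).
  by rewrite ler_nat /k leq_maxl.
Qed.

Lemma cond_exp_ae_le {N Y W Z h : T -> R} {c} : 0 < c ->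
  is_cond_exp P <<s Gen >> N Y -> is_cond_exp P <<s Gen >> W Z ->
  G_measurable h -> (forall t, 0 <= h t) ->
  measurable_fun setT N -> (forall t, 0 <= N t) -> (forall t, 0 <= W t) ->
  (forall t, N t <= h t + c * W t) ->
  {ae P, forall t, Y t <= h t + c * Z t}.
Proof.
move=> c0 cY cZ mh h0 mN N0 W0 NhW.
have mZ := cond_exp_G_measurable cZ.
have [_ _ intY] := cY; have [Z0 _ intZ] := cZ.
apply: ae_le_of_integral_le.
- exact: cond_exp_G_measurable cY.
- exact: measurable_funD mh (measurable_funM (measurable_cst c) mZ).
- by move=> t; rewrite addr_ge0 ?mulr_ge0 ?(ltW c0).
move=> E GE; have mE := sigma_Gen_measurable GE.
have mEF g : G_measurable g -> measurable_fun E (EFin \o g).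
  by move=> /G_measurable_fun; exact: measurable_EFin_in mE.
rewrite intY //.
apply: le_trans (integral_le_dominated P mE mN (G_measurable_fun mh) c0 N0 h0 W0 NhW) _.
under [X in (_ <= X)%E]eq_integral do rewrite EFinD EFinM.
rewrite ge0_integralD //; last 4 first.
- by move=> t _; rewrite lee_fin.
- exact: mEF.
- by move=> t _; rewrite lee_fin mulr_ge0 ?(ltW c0).
- by apply: emeasurable_funM; [exact: measurable_cst|exact: mEF].
rewrite ge0_integralZl ?lee_fin ?(ltW c0) -?intZ //.
- exact: mEF.
- by move=> t _; rewrite lee_fin.
Qed.

End ConditionalExpectation.

Section Measurability.
Context {dT : measure_display} {T : measurableType dT} {R : realType}.

Lemma measurable_of_sublevels (Gen : set (set T)) (f : T -> R) :
  (forall c, Gen [set t | f t <= c]) ->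
  measurable_fun (setT : set (g_sigma_algebraType Gen)) f.
Proof.
move=> Gen_f; apply: (measurability _ (RGenOInfty.measurableE R)) => //.
move=> _ [_ [c ->] <-].
have -> : setT `&` f @^-1` `]c, +oo[ = ~` [set t | f t <= c].
  apply/seteqP; split => t /=; rewrite in_itv /= andbT.
    by move=> [_ ct]; rewrite leNgt ct.
  by move=> /negP; rewrite -ltNge.
by apply: (@measurableC _ (g_sigma_algebraType Gen)); exact: sub_sigma_algebra.
Qed.

Lemma measurable_jnorm_sub_sqr {n} {d : 'I_n -> nat} (y : T -> joint R d) s :
  (forall i l, measurable_fun setT (fun t => y t i 0 l)) ->
  measurable_fun setT (fun t => jnorm (jsub (y t) s) ^+ 2).
Proof.
move=> my; have -> : (fun t => jnorm (jsub (y t) s) ^+ 2) =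
    (fun t => \sum_(i < n) \sum_(l < d i) (y t i 0 l - s i 0 l) ^+ 2).
  apply/funext => t; rewrite jnorm_sqrE; apply: eq_bigr => i _.
  by apply: eq_bigr => l _; rewrite !mxE.
apply: measurable_sum => i; apply: measurable_sum => l.
by apply/measurable_funX/measurable_funB => //; exact: measurable_cst.
Qed.

End Measurability.

Section NaturalFiltration.
Context {dT : measure_display} {T : measurableType dT} {R : realType}.
Context {n : nat} {d : 'I_n -> nat} {x : nat -> T -> joint R d}.
Hypothesis x_measurable : forall j i l, measurable_fun setT (fun t => x j t i 0 l).

Let Gen k := [set A : set T | exists (j : nat) (i : 'I_n) (l : 'I_(d i)) (c : R),
  (j <= k)%N /\ A = [set t | x j t i 0 l <= c]].

Lemma natural_filtration_generators_measurable k A : Gen k A -> measurable A.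
Proof.
move=> [j [i [l [c [_ ->]]]]].
have -> : [set t | x j t i 0 l <= c] = setT `&` (fun t => x j t i 0 l) @^-1` `]-oo, c].
  by rewrite setTI; apply/seteqP; split => t; rewrite /= in_itv.
by apply: x_measurable => //; exact: measurable_itv.
Qed.

Lemma natural_filtration_measurable_jnorm k s :
  measurable_fun (setT : set (g_sigma_algebraType (Gen k)))
    (fun t => jnorm (jsub (x k t) s) ^+ 2).
Proof.
apply: measurable_jnorm_sub_sqr => i l; apply: measurable_of_sublevels => c.
by exists k, i, l, c.
Qed.

End NaturalFiltration.

Lemma absorb_noise_bound {R : realFieldType} (alpha eta L nu1 nu2 S A X Xs Z Y : R) :
  0 < alpha -> 1 / alpha ^+ 2 <= S -> 0 <= A -> X <= 2 * A + 2 * Xs ->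
  Z <= (nu1 ^+ 2 * X + nu2 ^+ 2) / S ->
  Y <= (1 + alpha ^+ 2 - 2 * alpha * eta + 2 * alpha ^+ 2 * L ^+ 2) * A
       + (1 + 2 * alpha ^+ 2) * Z ->
  Y <= (1 - 2 * alpha * eta
        + alpha ^+ 2 * (1 + 2 * (1 + 2 * alpha ^+ 2) * nu1 ^+ 2 + 2 * L ^+ 2)) * A
       + (2 * (1 + 2 * alpha ^+ 2) * nu1 ^+ 2 * Xs + (1 + 2 * alpha ^+ 2) * nu2 ^+ 2) / S.
Proof.
move=> alpha_gt0 S_ge A0 hX hZ hY.
have alpha2_gt0 : 0 < alpha ^+ 2 by rewrite exprn_gt0.
have S0 : 0 < S by apply: lt_le_trans S_ge; rewrite div1r invr_gt0.
have iS : S^-1 <= alpha ^+ 2.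
  by rewrite -[alpha ^+ 2]invrK lef_pV2 ?posrE ?invr_gt0 // -div1r.
have c2_ge0 : 0 <= 1 + 2 * alpha ^+ 2 by have := sqr_ge0 alpha; lra.
have K_ge0 : 0 <= (1 + 2 * alpha ^+ 2) * nu1 ^+ 2 by rewrite mulr_ge0 // sqr_ge0.
have := ler_wpM2l c2_ge0 hZ.
have iS0 : 0 <= S^-1 by rewrite invr_ge0 ltW.
have := ler_wpM2l (mulr_ge0 K_ge0 iS0) hX.
have := ler_wpM2l (mulr_ge0 K_ge0 A0) iS.
move: hY; nra.
Qed.

Theorem lemma2
  (* probability space *)
  (dT : measure_display) (T : measurableType dT) (R : realType)
  (P : probability T R)
  (* game data: n players, player i has strategies in R^{d i} *)
  (n : nat) (d : 'I_n -> nat) (m : 'I_n -> nat)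
  (f : forall i : 'I_n, joint R d -> R)
  (r : forall i : 'I_n, 'rV[R]_(d i) -> \bar R)
  (psi : forall i : 'I_n, joint R d -> 'rV[R]_(m i) -> R)
  (xi : forall i : 'I_n, T -> 'rV[R]_(m i))
  (G : joint R d -> joint R d)
  (* constants *)
  (L eta nu1 nu2 alpha : R)
  (* the NE *)
  (xs : joint R d)
  (* VS-PGR: batch sizes, samples, iterates *)
  (Sb : nat -> nat)
  (xis : nat -> forall i : 'I_n, nat -> T -> 'rV[R]_(m i))
  (x : nat -> T -> joint R d) :
  let Rdom := fun (y : joint R d) => forall j : 'I_n, edom (r j) (y j) in
  let Rdom_but := fun (i : 'I_n) (y : joint R d) =>
      forall j : 'I_n, j != i -> edom (r j) (y j) in
  let gpsi := fun (i : 'I_n) (y : joint R d) (s : 'rV[R]_(m i)) =>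
      pgrad (fun z => psi i z s) i y in
  let F := natural_filtration x in
  let wbar := fun (k : nat) (t : T) => jsub
      (fun i : 'I_n => (Sb k)%:R^-1 *: \sum_(p < Sb k) gpsi i (x k t) (xis k i p t))
      (G (x k t)) in
  (* Assumption A *)
  (forall i : 'I_n, elsc (r i) /\ econvex (r i) /\
     forall y, (-oo < r i y)%E) ->
  (forall (i : 'I_n) (y : joint R d), Rdom_but i y ->
     exists U : set 'rV[R]_(d i), [/\ open U, edom (r i) `<=` U,
       (forall z, U z -> differentiable (fun v => f i (jupd y v)) z),
       {in U, continuous (grad (fun v => f i (jupd y v)))} &
       convex_on U (fun v => f i (jupd y v))]) ->
  (forall (i : 'I_n) (y : joint R d), Rdom_but i y ->
     forall s : 'rV[R]_(m i),
     exists U : set 'rV[R]_(d i), [/\ open U, edom (r i) `<=` U &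
       forall z, U z -> differentiable (fun v => psi i (jupd y v) s) z]) ->
  (* f_i(x) = E[psi_i(x; xi_i)] and the samples are realizations of xi_i *)
  (forall (i : 'I_n) (y : joint R d),
     (f i y)%:E = (\int[P]_t (psi i y (xi i t))%:E)%E) ->
  (forall (k : nat) (i : 'I_n) (p : nat), (p < Sb k)%N ->
     forall phi : 'rV[R]_(m i) -> R, continuous phi ->
     (exists M : R, forall v, `|phi v| <= M) ->
     (\int[P]_t (phi (xis k i p t))%:E = \int[P]_t (phi (xi i t))%:E)%E) ->
  (* G is the pseudo-gradient map *)
  (forall y : joint R d, G y = fun i => pgrad (f i) i y) ->
  (* x* is the Nash equilibrium *)
  is_NE f r xs ->
  (* Assumption B *)
  (forall y z : joint R d, Rdom y -> Rdom z ->
     jnorm (jsub (G y) (G z)) <= L * jnorm (jsub y z)) ->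
  0 < eta ->
  (forall y z : joint R d, Rdom y -> Rdom z ->
     jdot (jsub (G y) (G z)) (jsub y z) >= eta * jnorm (jsub y z) ^+ 2) ->
  0 <= nu1 -> 0 <= nu2 ->
  (forall k : nat, exists Z : T -> R,
     is_cond_exp P (F k) (fun t => jnorm (wbar k t) ^+ 2) Z /\
     {ae P, forall t, Z t <= (nu1 ^+ 2 * jnorm (x k t) ^+ 2 + nu2 ^+ 2) / (Sb k)%:R}) ->
  (* the VS-PGR scheme *)
  (forall (k : nat) (i : 'I_n) (l : 'I_(d i)),
     measurable_fun setT (fun t => x k t i 0 l)) ->
  (forall (t : T) (i : 'I_n), edom (r i) (x 0%N t i)) ->
  (forall (k : nat) (t : T) (i : 'I_n),
     is_prox (r i) alpha
       (x k t i - (alpha / (Sb k)%:R) *: \sum_(p < Sb k) gpsi i (x k t) (xis k i p t))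
       (x k.+1 t i)) ->
  (* step size and batch sizes *)
  0 < alpha -> alpha <= L ->
  {homo Sb : a b / (a <= b)%N} ->
  1 / alpha ^+ 2 <= (Sb 0)%:R ->
  let Lt := Num.sqrt (1 + 2 * (1 + 2 * alpha ^+ 2) * nu1 ^+ 2 + 2 * L ^+ 2) in
  let nu2b := 2 * (1 + 2 * alpha ^+ 2) * nu1 ^+ 2 * jnorm xs ^+ 2
              + (1 + 2 * alpha ^+ 2) * nu2 ^+ 2 in
  forall (k : nat) (Y : T -> R),
    is_cond_exp P (F k) (fun t => jnorm (jsub (x k.+1 t) xs) ^+ 2) Y ->
    {ae P, forall t, Y t <=
      (1 - 2 * alpha * eta + alpha ^+ 2 * Lt ^+ 2) * jnorm (jsub (x k t) xs) ^+ 2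
      + nu2b / (Sb k)%:R}.
Proof.
(* Not needed: the hypotheses on [psi], [xi] and the samples (the sampling enters only
   through the variance bound), lower semicontinuity of [r], [0 < eta], [0 <= nu1],
   [0 <= nu2] and [alpha <= L]. *)
move=> Rdom Rdom_but gpsi F wbar r_props f_smooth _ _ _ G_pgrad xs_NE G_lipschitz _
  G_strongly_monotone _ _ noise_var x_measurable x0_dom x_prox alpha_gt0 _ Sb_homo
  Sb0_ge Lt nu2b k Y Y_cond.
have r_convex i := (r_props i).2.1; have r_gtNy i := (r_props i).2.2.
have x_dom j t : Rdom (x j t).
  elim: j t => [|j IH] t i; first exact: x0_dom.
  exact: (prox_edom (r_gtNy i) (x_prox j t i) (IH t i)).
have xs_dom : Rdom xs := fun i => edom_of_leeD (xs_NE i _) (x0_dom point i).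
have f_diff i : differentiable (fun v => f i (jupd xs v)) (xs i).
  have [U [_ dom_U U_diff _ _]] := f_smooth i xs (fun j _ => xs_dom j).
  exact/U_diff/dom_U/xs_dom.
have x'_prox t i : is_prox (r i) alpha
    (x k t i - alpha *: (G (x k t) i + wbar k t i)) (x k.+1 t i).
  by rewrite /wbar /jsub [G _ i + _]addrC subrK scalerA; exact: x_prox.
have step t := pgr_step_sqr_le r_convex r_gtNy xs_NE xs_dom f_diff (G_pgrad xs)
  G_lipschitz G_strongly_monotone alpha_gt0 (x_dom k t) (x'_prox t).
have coef_ge0 t :=
  pgr_coef_ge0 xs_dom G_lipschitz G_strongly_monotone alpha_gt0 (x_dom k t).
have c2_gt0 : 0 < 1 + 2 * alpha ^+ 2 by rewrite ltr_pwDr // mulr_gt0 // exprn_gt0.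
have [Z [Z_cond Z_le]] := noise_var k.
have := cond_exp_ae_le P (natural_filtration_generators_measurable x_measurable k)
  c2_gt0 Y_cond Z_cond
  (measurable_funM (measurable_cst _) (natural_filtration_measurable_jnorm (x := x) k xs))
  coef_ge0 (measurable_jnorm_sub_sqr (x k.+1) xs (x_measurable k.+1))
  (fun t => sqr_ge0 _) (fun t => sqr_ge0 _) step.
apply: filterS2 Z_le => t Zt_le Yt_le.
have -> : Lt ^+ 2 = 1 + 2 * (1 + 2 * alpha ^+ 2) * nu1 ^+ 2 + 2 * L ^+ 2.
  by rewrite sqr_sqrtr //; have := sqr_ge0 nu1; have := sqr_ge0 L; nra.
apply: absorb_noise_bound alpha_gt0 _ (sqr_ge0 _) (jnorm_sqr_le_sub (x k t) xs) Zt_le Yt_le.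
by rewrite (le_trans Sb0_ge) // ler_nat Sb_homo.
Qed.
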